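(* There exist absolute constants $c_1,c_2>0$ such that for every $n\ge 1$ and every boolean function $f:\{-1,1\}^n\to\{-1,1\}$, $$\mathrm{Ent}(f)< c_1\, I(f)+c_2\sum_{k=1}^{n} I_k(f)\log\frac{1}{I_k(f)},$$ with the convention $I_k(f)\log\frac{1}{I_k(f)}=0$ when $I_k(f)=0$.
   Context: Let $x$ be uniformly distributed on $\{-1,1\}^n$. For $k\in[n]$, $\mu_k:\{-1,1\}^n\to\{-1,1\}^n$ flips the $k$-th coordinate. The influence of coordinate $k$ is $I_k(f)=\mathbb{P}_x[f(x)\neq f(\mu_k(x))]$ and the total influence is $I(f)=\sum_{k=1}^n I_k(f)$. For $S\subseteq[n]$ let $X_S(x)=\prod_{k\in S}x_k$ and $\hat f(S)=\mathbb{E}_x[f(x)X_S(x)]$ (Fourier–Walsh coefficients). The Fourier entropy is $\mathrm{Ent}(f)=\sum_{S\subseteq[n]}\hat f(S)^2\log_2\frac{1}{\hat f(S)^2}$ (terms with $\hat f(S)=0$ are $0$). *)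

From Stdlib Require Import Rdefinitions Rpower.
From HB Require Import structures.
From mathcomp Require Import all_boot all_order all_algebra.
From mathcomp Require Import Rstruct.
Set Implicit Arguments. Unset Strict Implicit. Unset Printing Implicit Defensive.
Import Order.TTheory GRing.Theory Num.Theory.
Local Open Scope ring_scope.

(* A point of {-1,1}^n, encoded by n booleans: true <-> -1, false <-> 1. *)
Definition cube (n : nat) := {ffun 'I_n -> bool}.

Definition coord n (x : cube n) (k : 'I_n) : R := if x k then -1 else 1.

Definition flip n (k : 'I_n) (x : cube n) : cube n :=
  [ffun i => if i == k then ~~ x i else x i].

Definition is_boolean n (f : cube n -> R) : Prop :=
  forall x, f x = 1 \/ f x = -1.

Definition prob n (A : {set cube n}) : R := #|A|%:R / (2 ^ n)%:R.

Definition infl n (f : cube n -> R) (k : 'I_n) : R :=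
  prob [set x : cube n | f x != f (flip k x)].

Definition total_infl n (f : cube n -> R) : R := \sum_(k < n) infl f k.

Definition chi n (S : {set 'I_n}) (x : cube n) : R := \prod_(k in S) coord x k.

Definition fourier n (f : cube n -> R) (S : {set 'I_n}) : R :=
  (\sum_(x : cube n) f x * chi S x) / (2 ^ n)%:R.

Definition log2 (x : R) : R := ln x / ln 2.

Definition fourier_entropy n (f : cube n -> R) : R :=
  \sum_(S : {set 'I_n})
     (let a := fourier f S ^+ 2 in if a == 0 then 0 else a * log2 (1 / a)).

Definition xlog_inv (t : R) : R := if t == 0 then 0 else t * ln (1 / t).

(** Write [w S = fhat(S)^2] and [p k = I_k(f)].  For a boolean [f], [w] is a
    probability distribution on subsets of [[n]] (Parseval), and [p k] is the
    probability under [w] that [k] belongs to the random set (Fourier formula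
    for influences).  The Shannon entropy of a distribution on [{0,1}^n] is at
    most the sum of the entropies of its marginals (Gibbs' inequality against
    the product of the marginals), so
    [Ent(f) ln 2 <= sum_k (p k ln (1/p k) + (1 - p k) ln (1/(1 - p k)))], and
    [(1 - p) ln (1/(1 - p)) <= p] bounds the second term by [I(f)]. *)
From Pilot Require Import Defs.
From Stdlib Require Import Rbase Rpower.
From HB Require Import structures.
From mathcomp Require Import all_boot all_order all_algebra.
From mathcomp Require Import Rstruct.
From mathcomp Require Import ring lra.
Set Implicit Arguments. Unset Strict Implicit. Unset Printing Implicit Defensive.
Import Order.TTheory GRing.Theory Num.Theory.
Local Open Scope ring_scope.

Lemma lnM (x y : R) : 0 < x -> 0 < y -> ln (x * y) = ln x + ln y.
Proof. by move=> /RltP hx /RltP hy; rewrite ln_mult. Qed.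

Lemma lnV (x : R) : 0 < x -> ln x^-1 = - ln x.
Proof. by move=> /RltP hx; rewrite -RinvE ln_Rinv. Qed.

Lemma ln_one_div (x : R) : 0 < x -> ln (1 / x) = - ln x.
Proof. by move=> /RltP hx; rewrite /Rdiv Rmult_1_l ln_Rinv. Qed.

Lemma ln_le_subr1 (x : R) : 0 < x -> ln x <= x - 1.
Proof.
move=> /RltP hx; have /RleP := exp_ineq1_le (ln x).
by rewrite exp_ln // RplusE R1E; lra.
Qed.

Lemma ln_prod (I : finType) (P : pred I) (F : I -> R) :
  (forall i, P i -> 0 < F i) -> ln (\prod_(i | P i) F i) = \sum_(i | P i) ln (F i).
Proof.
move=> F_gt0; suff [] : 0 < \prod_(i | P i) F i /\
    ln (\prod_(i | P i) F i) = \sum_(i | P i) ln (F i) by [].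
apply: (big_rec2 (fun a b => 0 < a /\ ln a = b)); first by rewrite ln_1.
by move=> i a b Pi [a_gt0 <-]; rewrite mulr_gt0 ?F_gt0 // lnM ?F_gt0.
Qed.

Lemma ln2_gt0 : 0 < ln 2.
Proof. exact/RltP/(Rlt_trans _ _ _ (Rinv_0_lt_compat 2 Rlt_0_2) ln_lt_2). Qed.

Lemma xlog_invE (t : R) : xlog_inv t = t * ln (1 / t).
Proof. by rewrite /xlog_inv; case: eqP => [->|]; rewrite ?mul0r. Qed.

Lemma xlog_inv_1B_le (p : R) : p <= 1 -> xlog_inv (1 - p)%R <= p.
Proof.
rewrite -subr_ge0 le0r subr_eq0 xlog_invE => /predU1P[<-|q_gt0].
  by rewrite subrr mul0r ler01.
have := ler_wpM2l (ltW q_gt0) (ln_le_subr1 (x := (1 - p)^-1) _).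
rewrite invr_gt0 lnV // -ln_one_div // mulrBr mulr1 divff ?gt_eqF // => /(_ q_gt0).
by rewrite subKr.
Qed.

(* Pointwise Gibbs: [ln (q/w) <= q/w - 1] multiplied by [w]. *)
Lemma xlog_inv_le_cross (w q : R) : 0 <= w -> 0 <= q -> (0 < w -> 0 < q) ->
  xlog_inv w <= w * ln (1 / q) + q - w.
Proof.
rewrite xlog_invE le0r => /predU1P[-> q_ge0 _|w_gt0 _ /(_ w_gt0) q_gt0].
  by rewrite !mul0r add0r subr0.
have := ler_wpM2l (ltW w_gt0) (ln_le_subr1 (x := q * w^-1) _).
rewrite !ln_one_div // lnM ?invr_gt0 // lnV // divr_gt0 // => /(_ isT).
by rewrite !mulrBr mulr1 mulrCA divff ?gt_eqF // mulr1; lra.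
Qed.

Lemma gibbs (I : finType) (w q : I -> R) :
  (forall i, 0 <= w i) -> (forall i, 0 <= q i) -> (forall i, 0 < w i -> 0 < q i) ->
  \sum_i q i = \sum_i w i ->
  \sum_i xlog_inv (w i) <= \sum_i w i * ln (1 / q i).
Proof.
move=> w_ge0 q_ge0 q_gt0 sum_qw.
apply: le_trans (ler_sum _ (fun i _ => xlog_inv_le_cross (w_ge0 i) (q_ge0 i) (q_gt0 i))) _.
by rewrite sumrB big_split /= sum_qw addrK.
Qed.

Definition marginal n (w : {set 'I_n} -> R) (k : 'I_n) : R :=
  \sum_(S : {set 'I_n} | k \in S) w S.

Section Subadditivity.

Variables (n : nat) (w : {set 'I_n} -> R).
Hypotheses (w_ge0 : forall S, 0 <= w S) (sum_w : \sum_S w S = 1).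

Let p := marginal w.

Lemma marginal_compl k : 1 - p k = \sum_(S : {set 'I_n} | k \notin S) w S.
Proof. by rewrite -sum_w (bigID (fun S : {set 'I_n} => k \in S)) /= addrC addrK. Qed.

Lemma marginal_le1 k : p k <= 1.
Proof. by rewrite -subr_ge0 marginal_compl sumr_ge0. Qed.

(* [q] is the law of [S] if its coordinates were independent with the same marginals. *)
Let factor k (S : {set 'I_n}) := if k \in S then p k else 1 - p k.
Let q (S : {set 'I_n}) := \prod_k factor k S.

Lemma le_factor k S : w S <= factor k S.
Proof.
have le_term (P : pred {set 'I_n}) : P S -> w S <= \sum_(T | P T) w T.
  by move=> PS; rewrite (bigD1 S) //= lerDl sumr_ge0.
by rewrite /factor /p /marginal marginal_compl; case: ifP => [|/negbT]; apply: le_term.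
Qed.

Lemma sum_product_law : \sum_S q S = 1.
Proof.
have -> : 1 = \prod_k (p k + (1 - p k)) by rewrite big1 // => k _; rewrite addrC subrK.
by rewrite bigA_distr.
Qed.

Lemma factor_gt0 S : 0 < w S -> forall k, 0 < factor k S.
Proof. by move=> w_gt0 k; apply: lt_le_trans w_gt0 (le_factor k S). Qed.

Lemma cross_entropy_product_law :
  \sum_S w S * ln (1 / q S) = \sum_k (xlog_inv (p k) + xlog_inv (1 - p k)%R).
Proof.
have split_ln S : w S * ln (1 / q S) = \sum_k w S * ln (1 / factor k S).
  have [->|wS_neq0] := eqVneq (w S) 0.
    by rewrite mul0r big1 // => k _; rewrite mul0r.
  have w_gt0 : 0 < w S by rewrite lt0r wS_neq0 w_ge0.
  have fac_gt0 k : 0 < factor k S by exact: factor_gt0.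
  rewrite -mulr_sumr ln_one_div ?prodr_gt0 // ln_prod // -sumrN.
  by congr (_ * _); apply: eq_bigr => k _; rewrite ln_one_div.
rewrite (eq_bigr _ (fun S _ => split_ln S)) exchange_big /=; apply: eq_bigr => k _.
rewrite (bigID (fun S : {set 'I_n} => k \in S)) /= !xlog_invE.
rewrite {1}marginal_compl /p /marginal !mulr_suml.
by congr (_ + _); apply: eq_bigr => S kS; rewrite /factor ?kS ?(negbTE kS).
Qed.

Lemma entropy_le_sum_marginal_entropy :
  \sum_S xlog_inv (w S) <= \sum_k (xlog_inv (p k) + xlog_inv (1 - p k)%R).
Proof.
rewrite -cross_entropy_product_law; apply: gibbs => // [S|S wS_gt0|].
- by apply: prodr_ge0 => k _; apply: le_trans (le_factor k S).
- by apply: prodr_gt0 => k _; apply: factor_gt0.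
- by rewrite sum_product_law sum_w.
Qed.

End Subadditivity.

Lemma card_cube n : #|cube n| = (2 ^ n)%N.
Proof. by rewrite card_ffun card_bool card_ord. Qed.

Lemma cube_size_neq0 n : (2 ^ n)%:R != 0 :> R.
Proof. by rewrite pnatr_eq0 expn_eq0. Qed.

Lemma coord_mulrr n (x : cube n) k : Defs.coord x k * Defs.coord x k = 1.
Proof. by rewrite /Defs.coord; case: (x k); rewrite ?mulrNN mulr1. Qed.

Lemma sum_chiM n (x y : cube n) :
  \sum_(S : {set 'I_n}) chi S x * chi S y = if x == y then (2 ^ n)%:R else 0.
Proof.
have -> : \sum_(S : {set 'I_n}) chi S x * chi S y =
    \prod_k (Defs.coord x k * Defs.coord y k + 1).
  rewrite bigA_distr; apply: eq_bigr => S _.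
  by rewrite /chi -big_split /= -big_mkcond.
case: eqP => [<-|/eqP x_neq_y].
  by under eq_bigr do rewrite coord_mulrr; rewrite prodr_const card_ord natrX.
have [k xk_neq_yk] : exists k : 'I_n, x k != y k.
  apply/existsP; apply: contraR x_neq_y => /existsPn x_eq_y.
  by apply/eqP/ffunP => i; apply/eqP/negPn.
rewrite (bigD1 k) //= /Defs.coord; move: xk_neq_yk.
by case: (x k); case: (y k) => //= _; rewrite ?mulrN1 ?mulN1r ?addNr ?mul0r.
Qed.

Lemma parseval n (g : cube n -> R) :
  \sum_(S : {set 'I_n}) fourier g S ^+ 2 = (\sum_x g x ^+ 2) / (2 ^ n)%:R.
Proof.
have N_neq0 := cube_size_neq0 n; set N := (2 ^ n)%:R : R in N_neq0 *.
have expand S : fourier g S ^+ 2 =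
    (\sum_x \sum_y g x * g y * (chi S x * chi S y)) / (N * N).
  rewrite /fourier expr2 mulf_div big_distrlr /=.
  by congr (_ / _); apply: eq_bigr => x _; apply: eq_bigr => y _; ring.
under eq_bigr do rewrite expand.
rewrite -mulr_suml exchange_big /=.
under eq_bigr do rewrite exchange_big /=.
under eq_bigr do under eq_bigr do rewrite -mulr_sumr sum_chiM.
have diag x : \sum_y g x * g y * (if x == y then N else 0) = g x ^+ 2 * N.
  rewrite (bigD1 x) //= eqxx big1 ?addr0 ?expr2 // => y.
  by rewrite eq_sym => /negbTE ->; rewrite mulr0.
under eq_bigr do rewrite diag.
by rewrite -mulr_suml invfM mulrA mulfK.
Qed.

Lemma flipK n (k : 'I_n) : involutive (flip k).
Proof. by move=> x; apply/ffunP => i; rewrite !ffunE; case: eqP => // _; apply: negbK. Qed.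

Lemma chi_flip n (k : 'I_n) S x :
  chi S (flip k x) = if k \in S then - chi S x else chi S x.
Proof.
have coord_flip i : Defs.coord (flip k x) i =
    if i == k then - Defs.coord x i else Defs.coord x i.
  by rewrite /Defs.coord ffunE; case: eqP => _ //; case: (x i); rewrite ?opprK.
rewrite /chi; case: ifP => kS.
  rewrite (bigD1 k) // [in RHS](bigD1 k) //= coord_flip eqxx mulNr.
  by congr (- (_ * _)); apply: eq_bigr => i /andP[_ /negbTE ik]; rewrite coord_flip ik.
apply: eq_bigr => i iS; rewrite coord_flip; case: eqP => // ik.
by rewrite -ik iS in kS.
Qed.

Definition discrete_deriv n (k : 'I_n) (f : cube n -> R) (x : cube n) : R :=
  ((f x - f (flip k x)) / 2)%R.

Lemma fourier_discrete_deriv n (k : 'I_n) f S :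
  fourier (discrete_deriv k f) S = if k \in S then fourier f S else 0.
Proof.
have sum_flip : \sum_x f (flip k x) * chi S x = \sum_x f x * chi S (flip k x).
  rewrite [RHS](reindex_inj (inv_inj (flipK k))) /=.
  by apply: eq_bigr => x _; rewrite flipK.
have sign_flip : \sum_x f x * chi S (flip k x) =
    (if k \in S then -1 else 1) * \sum_x f x * chi S x.
  rewrite mulr_sumr; apply: eq_bigr => x _.
  by rewrite chi_flip; case: ifP; rewrite ?mulN1r ?mul1r ?mulrN ?mulNr.
rewrite /fourier /discrete_deriv.
under eq_bigr do rewrite mulrAC mulrBl.
rewrite -mulr_suml sumrB sum_flip sign_flip.
by case: ifP => _; rewrite !RdivE; field; rewrite pnatr_eq0 ?expn_eq0.
Qed.

Lemma infl_fourier n (f : cube n -> R) k : is_boolean f ->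
  infl f k = marginal (fun S => fourier f S ^+ 2) k.
Proof.
move=> f_bool.
have -> : marginal (fun S => fourier f S ^+ 2) k =
    \sum_S fourier (discrete_deriv k f) S ^+ 2.
  rewrite /marginal big_mkcond; apply: eq_bigr => S _.
  by rewrite fourier_discrete_deriv; case: ifP; rewrite ?expr0n.
rewrite parseval /infl /prob; congr (_ / _).
rewrite -sumr_const big_mkcond /=; apply: eq_bigr => x _.
have one_neq_m1 : (1 != -1 :> R) by apply/eqP; lra.
rewrite inE /discrete_deriv.
case: (f_bool x) => ->; case: (f_bool (flip k x)) => ->;
  by rewrite ?eqxx ?one_neq_m1 ?(eq_sym (-1)) ?one_neq_m1 /=; field.
Qed.

Lemma sum_fourier_sqr n (f : cube n -> R) : is_boolean f ->
  \sum_S fourier f S ^+ 2 = 1.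
Proof.
move=> f_bool; rewrite parseval (eq_bigr (fun _ => 1)) => [|x _].
  by rewrite sumr_const card_cube divff ?cube_size_neq0.
by case: (f_bool x) => ->; rewrite ?sqrrN expr1n.
Qed.

Lemma fourier_entropyE n (f : cube n -> R) :
  fourier_entropy f = (ln 2)^-1 * \sum_S xlog_inv (fourier f S ^+ 2).
Proof.
rewrite /fourier_entropy mulr_sumr; apply: eq_bigr => S _ /=.
by rewrite /xlog_inv /log2; case: eqP => _; rewrite ?mulr0 // [Rdiv _ (ln 2)]RdivE; ring.
Qed.

Theorem theorem1p3 :
  exists c1 c2 : R, 0 < c1 /\ 0 < c2 /\
    forall (n : nat), (0 < n)%N ->
    forall f : cube n -> R, is_boolean f ->
      fourier_entropy f <=
        c1 * total_infl f + c2 * \sum_(k < n) xlog_inv (infl f k).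
Proof.
have ln2_inv_gt0 : 0 < (ln 2)^-1 by rewrite invr_gt0 ln2_gt0.
exists (ln 2)^-1, (ln 2)^-1; split=> //; split=> // n _ f f_bool.
rewrite fourier_entropyE /total_infl -mulrDr -big_split /=.
rewrite ler_pM2l //.
have w_ge0 S : 0 <= fourier f S ^+ 2 by rewrite sqr_ge0.
have sum_w := sum_fourier_sqr f_bool.
apply: le_trans (entropy_le_sum_marginal_entropy w_ge0 sum_w) _.
apply: ler_sum => k _; rewrite infl_fourier // [X in _ <= X]addrC lerD2l.
exact/xlog_inv_1B_le/marginal_le1.
Qed.
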